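(* Let $p$ be an odd prime, let $H\le\mathrm{S}_{n}$, $n=pk$, have orbits $\Omega_1,\dots,\Omega_k$ each of size $p$ such that each $D_i:=H|_{\Omega_i}$ is permutation isomorphic to the dihedral group $\mathrm{D}_{2p}$ of order $2p$ in its natural action on $p$ points. Let $G_i$ be the Sylow $p$-subgroup of $D_i$, and for $q\in\{2,p\}$ let $H_q$ be a Sylow $q$-subgroup of $H$. Let $\alpha_i\in\Omega_i$ ($1\le i\le k$) be points with $H_2|_{\Omega_i}=(D_i)_{\alpha_i}$ (such points exist). For $2\le i\le k$ let $\phi_i:\Omega_1\to\Omega_i$ be a bijection witnessing a permutation isomorphism from $D_1$ to $D_i$ with $\phi_i(\alpha_1)=\alpha_i$. Let $K=\langle\overline{\phi_i}:2\le i\le k\rangle$, $L=\langle N_{\mathrm{Sym}(\Omega_1)}(G_1),\dots,N_{\mathrm{Sym}(\Omega_k)}(G_k),K\rangle$ and $I=N_L(H_p)\cap N_L(H_2)$. Then $N_{\mathrm{S}_n}(H)=IH$.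
   Context: Subgroups of $\mathrm{Sym}(\Omega_i)$ are regarded as subgroups of $\mathrm{S}_n$ with support $\Omega_i$. $(D_i)_{\alpha_i}$ is the point stabiliser. A bijection $\phi:\Omega_1\to\Omega_i$ witnesses a permutation isomorphism from $D_1$ to $D_i$ if there is an isomorphism $\psi:D_1\to D_i$ with $\phi(\delta^g)=\phi(\delta)^{\psi(g)}$ for all $\delta\in\Omega_1$, $g\in D_1$. For a bijection $\varphi:\Omega_1\to\Omega_i$ ($i\neq 1$), $\overline\varphi$ is the involution in $\mathrm{Sym}(\Omega_1\cup\Omega_i)$ with $\alpha^{\overline\varphi}=\varphi(\alpha)$ for $\alpha\in\Omega_1$. *)

From mathcomp Require Import all_boot all_algebra all_fingroup all_solvable.
Set Implicit Arguments. Unset Strict Implicit. Unset Printing Implicit Defensive.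
Local Open Scope group_scope.

(* Restriction H|_S of a permutation group H to an invariant set S, regarded
   as a subgroup of Sym(S) inside Sym(T) (support S). *)
Definition restr_grp (T : finType) (S : {set T}) (H : {set {perm T}})
  : {set {perm T}} := restr_perm S @* H.

Definition witnesses_perm_iso (T1 T2 : finType) (phi : T1 -> T2)
  (A : {set T1}) (D1 : {set {perm T1}}) (B : {set T2}) (D2 : {set {perm T2}}) :=
  [/\ {in A &, injective phi}, phi @: A = B &
    exists psi : {perm T1} -> {perm T2},
      [/\ {in D1 &, {morph psi : x y / x * y}}, {in D1 &, injective psi},
          psi @: D1 = D2 &
          forall delta g, delta \in A -> g \in D1 ->
            phi (g delta) = (psi g) (phi delta)]].

Definition perm_iso (T1 T2 : finType)
  (A : {set T1}) (D1 : {set {perm T1}}) (B : {set T2}) (D2 : {set {perm T2}}) :=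
  exists phi : T1 -> T2, witnesses_perm_iso phi A D1 B D2.

Definition dihedral_nat (p : nat) : {set {perm 'Z_p}} :=
  [set s : {perm 'Z_p} | [exists a : bool, exists b : 'Z_p,
     [forall x : 'Z_p, s x == ((if a then - x else x) + b)%R]]].

Definition bar_involution (T : finType) (A : {set T}) (phi : T -> T)
  (s : {perm T}) :=
  (forall x, x \in A -> s x = phi x /\ s (phi x) = x) /\
  (forall x, x \notin A -> x \notin phi @: A -> s x = x).

From mathcomp Require Import all_boot all_algebra all_fingroup all_solvable.
Set Implicit Arguments. Unset Strict Implicit. Unset Printing Implicit Defensive.
Local Open Scope group_scope.

(* Each D_i has order dividing 2p, so its Sylow p-subgroup G_i is normal in
   D_i. As H embeds in the product of the D_i, its Sylow p-subgroup H_p is the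
   intersection of H with the preimages of the G_i; hence H_p is normal, thus
   characteristic, in H, and H = H_p H_2 since only 2 and p divide |H|.
   An element x of N(H) permutes the orbits and maps G_l onto G_j whenever
   it maps Omega_l onto Omega_j. The involutions phibar_i act on the orbits as
   the transpositions (1 i) and on the D_l accordingly, so composing x with
   products of them yields an element fixing every orbit; such an element is
   the product of its restrictions, each in N_Sym(Omega_i)(G_i). Hence
   N(H) <= L, and the Frattini argument N(H) = H N_N(H)(H_2) gives N(H) = IH. *)

Lemma dvdn_double_of_multiple_le p m : 0 < m -> p %| m -> m <= (2 * p)%N -> m %| (2 * p)%N.
Proof.
move=> m_gt0 /dvdnP[c defm]; move: m_gt0; rewrite defm muln_gt0 => /andP[c_gt0 p_gt0].
rewrite leq_pmul2r // => c_le2; rewrite dvdn_pmul2r //.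
by case: {defm}c c_gt0 c_le2 => [|[|[|]]].
Qed.

Section SylowFacts.
Variable gT : finGroupType.
Implicit Types (p q : nat) (D G H P Q L : {group gT}).

Lemma Sylow_normal_card_dvd_double p D G :
  prime p -> #|D| %| (2 * p)%N -> p.-Sylow(D) G -> G <| D.
Proof.
move=> p_pr dvD2p sylG; have sGD := pHall_sub sylG.
have iG_dv2 : #|D : G| %| 2.
  have [_ _ p'iG] := and3P sylG.
  rewrite -(@Gauss_dvdl _ _ p) ?(p'nat_coprime p'iG) ?pnat_id //.
  exact: dvdn_trans (dvdn_indexg D G) dvD2p.
have [iG1 | iG_neq1] := eqVneq #|D : G| 1%N; first by rewrite (index1g sGD iG1) normal_refl.
exact: index2_normal sGD (prime_nt_dvdP (isT : prime 2) iG_neq1 iG_dv2).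
Qed.

Lemma Sylow_joing_prime_pair p q H P Q :
  p.-Sylow(H) P -> q.-Sylow(H) Q ->
  (forall r, prime r -> r %| #|H| -> r = p \/ r = q) -> P <*> Q = H.
Proof.
move=> sylP sylQ pq_H.
have sPQH : P <*> Q \subset H by rewrite join_subG (pHall_sub sylP) (pHall_sub sylQ).
apply: index1g sPQH _; apply/eqP; rewrite eqn_leq indexg_gt0 andbT leqNgt.
apply/negP=> /pdiv_prime r_pr; set r := pdiv _ in r_pr.
have r_dvd : r %| #|H : P <*> Q| := pdiv_dvd _.
have [[_ _ p'iP] [_ _ q'iQ]] := (and3P sylP, and3P sylQ).
have r'P : p^'.-nat r.
  exact: pnat_dvd r_dvd (pnat_dvd (indexgS H (joing_subl P Q)) p'iP).
have r'Q : q^'.-nat r.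
  exact: pnat_dvd r_dvd (pnat_dvd (indexgS H (joing_subr P Q)) q'iQ).
rewrite !(pnatE _ r_pr) !inE in r'P r'Q.
by case: (pq_H r r_pr (dvdn_trans r_dvd (dvdn_indexg _ _))) => /eqP; apply/negP.
Qed.

Lemma normaliser_Sylow_joing q H P Q L :
  q.-Sylow(H) Q -> P <*> Q = H ->
  'N(H) \subset 'N(P) -> 'N(H) \subset L ->
  'N(H) = ('N_L(P) :&: 'N_L(Q)) * H.
Proof.
move=> sylQ defH nPNH sNHL; set I := _ :&: _.
have nHI : I \subset 'N(H).
  rewrite -defH normsY // ?(subset_trans (subsetIl _ _) (subsetIr _ _)) //.
  exact: subset_trans (subsetIr _ _) (subsetIr _ _).
have sNQI : 'N_('N(H))(Q) \subset I.
  apply/subsetP=> x /setIP[nHx nQx].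
  by rewrite !in_setI (subsetP sNHL _ nHx) (subsetP nPNH _ nHx) nQx.
apply/eqP; rewrite eqEsubset mul_subG ?normG // andbT.
by rewrite -{1}(Frattini_arg (normalG H) sylQ) (normC nHI) mulgS.
Qed.
End SylowFacts.

Canonical restr_grp_group (T : finType) (S : {set T}) (H : {group {perm T}}) :=
  Eval hnf in [group of restr_grp S H].

Section PermFacts.
Variable T : finType.
Implicit Types (S : {set T}) (g t x y : {perm T}).

Lemma conjg_permE g y b : (g ^ y) b = y (g (y^-1 b)).
Proof. by rewrite conjgE !permM. Qed.

Lemma perm_imsetM x y S : (x * y) @: S = y @: (x @: S).
Proof. by rewrite -imset_comp; apply: eq_imset => a; rewrite permM. Qed.

Lemma mem_perm_imset x S b : (b \in x @: S) = (x^-1 b \in S).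
Proof. by rewrite -{1}(permKV x b) mem_imset //; apply: perm_inj. Qed.

Lemma perm_imset_fix t S : {in S, forall b, t b = b} -> t @: S = S.
Proof.
move=> tS; apply/setP=> b; apply/imsetP/idP=> [[c cS ->]|bS]; first by rewrite tS.
by exists b; rewrite ?tS.
Qed.

Lemma conjg_perm_on_fix t g S :
  {in S, forall b, t b = b} -> perm_on S g -> g ^ t = g.
Proof.
move=> tS gS; apply/permP=> b; rewrite conjg_permE.
have [bS|bS] := boolP (b \in S).
  have tVb : t^-1 b = b by rewrite -{1}(tS b bS) permK.
  by rewrite tVb tS // perm_closed.
have tVb : t^-1 b \notin S by apply: contra bS => tbS; rewrite -(permKV t b) tS.
by rewrite (out_perm gS tVb) permKV (out_perm gS bS).
Qed.

Lemma perm_on_restr_grp S (H : {group {perm T}}) g :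
  g \in restr_grp S H -> perm_on S g.
Proof. by case/morphimP=> h _ _ ->; apply: restr_perm_on. Qed.

Lemma astabs_perm_imset x S : x @: S = S -> x \in 'N(S | 'P).
Proof.
move=> xS; apply/astabsP=> b; rewrite /= apermE -{1}xS mem_imset //.
exact: perm_inj.
Qed.

Lemma astabs_permJ S h x :
  h \in 'N(S | 'P) -> h ^ x \in 'N(x @: S | 'P).
Proof.
move=> nSh; apply/astabsP=> b; rewrite /= apermE !mem_perm_imset conjg_permE permK.
by rewrite (astabs_act _ nSh).
Qed.

Lemma restr_permJ S h x :
  h \in 'N(S | 'P) -> restr_perm S h ^ x = restr_perm (x @: S) (h ^ x).
Proof.
move=> nSh; apply/permP=> b; rewrite conjg_permE.
have [bxS|bxS] := boolP (b \in x @: S).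
  have xVbS : x^-1 b \in S by rewrite -mem_perm_imset.
  by rewrite !restr_permE ?astabs_permJ // ?perm_closed ?restr_perm_on // conjg_permE.
rewrite (out_perm (restr_perm_on _ _) bxS) (out_perm (restr_perm_on _ _)) ?permKV //.
by rewrite -mem_perm_imset.
Qed.

Lemma restr_grpJ S (H : {group {perm T}}) x :
  H \subset 'N(S | 'P) -> restr_grp S H :^ x = restr_grp (x @: S) (H :^ x).
Proof.
move=> nSH; have nxSHx : H :^ x \subset 'N(x @: S | 'P).
  by apply/subsetP=> _ /imsetP[h Hh ->]; rewrite astabs_permJ ?(subsetP nSH).
rewrite /restr_grp !morphimEsub // /conjugate -!imset_comp.
by apply: eq_in_imset => h Hh /=; rewrite restr_permJ ?(subsetP nSH).
Qed.

Lemma conjg_restr_perm S x g :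
  x \in 'N(S | 'P) -> perm_on S g -> g ^ restr_perm S x = g ^ x.
Proof.
move=> nSx gS; set r := restr_perm S x.
have grS : perm_on S (g ^ r) by rewrite conjgE !perm_onM ?perm_onV ?restr_perm_on.
have fixS : {in S, forall b, (r^-1 * x) b = b}.
  move=> b bS; have rVbS : r^-1 b \in S by rewrite perm_closed ?perm_onV ?restr_perm_on.
  by rewrite permM -(restr_permE nSx rVbS) permKV.
by rewrite -{1}(mulKVg r x) conjgM (conjg_perm_on_fix fixS grS).
Qed.

Lemma prod_restr_perm (I : finType) (Omega : I -> {set T}) x :
  (forall b, exists i, b \in Omega i) ->
  (forall i j b, b \in Omega i -> b \in Omega j -> i = j) ->
  (forall i, x \in 'N(Omega i | 'P)) ->
  x = \prod_i restr_perm (Omega i) x.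
Proof.
move=> cover disj nOx.
have prodE r b j : uniq r -> b \in Omega j ->
    (\prod_(i <- r) restr_perm (Omega i) x) b = if j \in r then x b else b.
  elim: r b => [|i r IHr] b /=; first by rewrite big_nil perm1.
  case/andP=> ir r_uniq bj; rewrite big_cons permM in_cons.
  have [eij|ij] := eqVneq i j.
    have xbj : x b \in Omega j by have := astabs_act b (nOx j); rewrite /= apermE => ->.
    by subst i; rewrite restr_permE // IHr ?(negPf ir).
  rewrite (out_perm (restr_perm_on (Omega i) x)) ?IHr //.
  by apply: contra ij => /disj/(_ bj)->.
apply/permP=> b; have [j bj] := cover b.
by rewrite (prodE _ _ j) ?index_enum_uniq ?mem_index_enum.
Qed.

End PermFacts.

Lemma card_perm_iso (T1 T2 : finType) (A : {set T1}) (D1 : {set {perm T1}})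
    (B : {set T2}) (D2 : {set {perm T2}}) :
  perm_iso A D1 B D2 -> #|D2| = #|D1|.
Proof. by case=> phi [_ _ [psi [_ psi_inj <- _]]]; apply: card_in_imset. Qed.

Lemma card_dihedral_nat p : 1 < p -> #|dihedral_nat p| <= (2 * p)%N.
Proof.
move=> p_gt1.
pose f (ab : bool * 'Z_p) : {perm 'Z_p} := odflt 1 [pick s : {perm 'Z_p} |
  [forall x, s x == ((if ab.1 then - x else x) + ab.2)%R]].
have sDf : dihedral_nat p \subset f @: setT.
  apply/subsetP=> s; rewrite inE => /existsP[a /existsP[b /forallP sE]].
  apply/imsetP; exists (a, b); rewrite ?inE // /f.
  case: pickP => [s' /forallP s'E|/(_ s)]; last by rewrite /= (introT forallP sE).
  by apply/permP=> x; rewrite (eqP (sE x)) (eqP (s'E x)).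
apply: leq_trans (subset_leq_card sDf) _; apply: leq_trans (leq_imset_card _ _) _.
by rewrite cardsT card_prod card_bool card_ord Zp_cast.
Qed.

Section OrbitBlocks.
Variables (T I : finType) (H : {group {perm T}}) (Omega : I -> {set T}).
Hypothesis Omega_inj : injective Omega.
Hypothesis orbits_Omega : [set orbit 'P H a | a : T] = [set Omega i | i : I].

Local Notation D i := (restr_grp (Omega i) H).

Lemma Omega_orbit i a : a \in Omega i -> Omega i = orbit 'P H a.
Proof.
have /imsetP[b _ ->] : Omega i \in [set orbit 'P H a | a : T].
  by rewrite orbits_Omega imset_f.
by move=> ab; apply/orbit_eqP; rewrite orbit_sym.
Qed.

Lemma Omega_cover a : exists i, a \in Omega i.
Proof.
have /imsetP[i _ Ei] : orbit 'P H a \in [set Omega i | i : I].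
  by rewrite -orbits_Omega imset_f.
by exists i; rewrite -Ei orbit_refl.
Qed.

Lemma Omega_nonempty i : exists a, a \in Omega i.
Proof.
have /imsetP[a _ ->] : Omega i \in [set orbit 'P H a | a : T].
  by rewrite orbits_Omega imset_f.
by exists a; apply: orbit_refl.
Qed.

Lemma mem_Omega_inj i j a : a \in Omega i -> a \in Omega j -> i = j.
Proof. by move=> ai aj; apply: Omega_inj; rewrite (Omega_orbit ai) (Omega_orbit aj). Qed.

Lemma acts_Omega i : H \subset 'N(Omega i | 'P).
Proof.
by have [a ai] := Omega_nonempty i; rewrite (Omega_orbit ai) acts_orbit ?subsetT.
Qed.

Lemma mem_restr_Omega i h : h \in H -> restr_perm (Omega i) h \in D i.
Proof. by move=> Hh; rewrite mem_morphim ?(subsetP (acts_Omega i)). Qed.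

Lemma card_Omega_dvd_restr i : #|Omega i| %| #|D i|.
Proof.
have [a ai] := Omega_nonempty i.
suff Eorb : orbit 'P (D i) a = Omega i by rewrite -{1}Eorb dvdn_orbit.
rewrite [RHS](Omega_orbit ai); apply/setP=> b.
apply/orbitP/orbitP=> [[_ /morphimP[h nOh Hh ->] <-]|[h Hh <-]].
  by exists h; rewrite //= !apermE restr_permE.
exists (restr_perm (Omega i) h); first exact: mem_restr_Omega.
by rewrite /= !apermE restr_permE ?(subsetP (acts_Omega i)).
Qed.

Lemma exists_restr_order q x :
  prime q -> x \in H -> #[x] = q -> exists i, #[restr_perm (Omega i) x] = q.
Proof.
move=> q_pr Hx ox; have [a xa] : exists a, x a != a.
  apply/existsP; apply: contraTT q_pr => /existsPn fix_x.
  suff x1 : x = 1 by rewrite -ox x1 order1.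
  by apply/permP=> a; rewrite perm1; apply/eqP; rewrite -[_ == _]negbK fix_x.
have [i ai] := Omega_cover a; exists i.
have nOx := subsetP (acts_Omega i) x Hx.
apply/(prime_nt_dvdP q_pr); last by rewrite -ox (morph_order _ nOx).
by rewrite order_eq1; apply: contra xa => /eqP rx1; rewrite -(restr_permE nOx ai) rx1 perm1.
Qed.

Lemma prime_dvd_restr_grp q :
  prime q -> q %| #|H| -> exists i, q %| #|D i|.
Proof.
move=> q_pr /(Cauchy q_pr)[x Hx ox]; have [i oxi] := exists_restr_order q_pr Hx ox.
by exists i; rewrite -oxi order_dvdG ?mem_restr_Omega.
Qed.

Lemma normaliser_perm_Omega x l :
  x \in 'N(H) -> exists j, x @: Omega l = Omega j /\ D l :^ x = D j.
Proof.
move=> nHx; have [a al] := Omega_nonempty l.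
have [j xaj] := Omega_cover (x a); exists j.
have xOl : x @: Omega l = Omega j.
  rewrite (Omega_orbit al) (Omega_orbit xaj); apply/setP=> b.
  by rewrite mem_perm_imset -(orbit_conjsg 'P H x) /= !apermE permKV (normP nHx).
by split; rewrite // restr_grpJ ?acts_Omega // (normP nHx) xOl.
Qed.

Variables (p : nat) (G : I -> {group {perm T}}).
Hypothesis G_Sylow : forall i, p.-Sylow(D i) (G i).
Hypothesis G_normal : forall i, G i <| D i.

Lemma Sylow_conj_of_restr_conj x l j : D l :^ x = D j -> G l :^ x = G j.
Proof.
move=> DlJ; have defGj := normal_Hall_pcore (G_Sylow j) (G_normal j).
have sylGlx : p.-Sylow(D j) (G l :^ x) by rewrite -DlJ pHallJ2 G_Sylow.
by rewrite (eq_Hall_pcore _ sylGlx) defGj ?G_Sylow.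
Qed.

Lemma normaliser_conj_Sylow x l :
  x \in 'N(H) -> exists j, x @: Omega l = Omega j /\ G l :^ x = G j.
Proof.
move=> nHx; have [j [xOl DlJ]] := normaliser_perm_Omega l nHx.
by exists j; rewrite xOl (Sylow_conj_of_restr_conj DlJ).
Qed.

Lemma Sylow_normal_of_blocks (P : {group {perm T}}) : p.-Sylow(H) P -> P <| H.
Proof.
move=> sylP; pose Q := H :&: \bigcap_i restr_perm (Omega i) @*^-1 G i.
have sPQ : P \subset Q.
  rewrite subsetI (pHall_sub sylP); apply/bigcapsP=> i _.
  have sPN := subset_trans (pHall_sub sylP) (acts_Omega i).
  have sPiDi := morphimS (restr_perm (Omega i)) (pHall_sub sylP).
  rewrite -sub_morphim_pre // (sub_normal_Hall (G_Sylow i) (G_normal i) sPiDi).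
  exact: morphim_pgroup (pHall_pgroup sylP).
have pQ : p.-group Q.
  apply/pgroupP=> q q_pr /(Cauchy q_pr)[x /setIP[Hx /bigcapP xG] ox].
  have [i oxi] := exists_restr_order q_pr Hx ox.
  have /morphpreP[_ Gx] := xG i isT.
  by apply: (pgroupP (pHall_pgroup (G_Sylow i))) => //; rewrite -oxi order_dvdG.
rewrite /normal (pHall_sub sylP) -(sub_pHall sylP pQ sPQ (subsetIl _ _)).
rewrite normsI ?normG //; apply/norms_bigcap/bigcapsP=> i _.
apply: subset_trans (morphpre_norms _ (normal_norm (G_normal i))).
by rewrite -sub_morphim_pre ?acts_Omega.
Qed.

End OrbitBlocks.

Section BarInvolution.
Variables (T : finType) (A : {set T}) (phi : T -> T) (t : {perm T}).
Hypothesis t_bar : bar_involution A phi t.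
Hypothesis disjoint_A_phiA : [disjoint A & phi @: A].

Lemma bar_on_A a : a \in A -> t a = phi a.
Proof. by case: t_bar => tA _ /tA[]. Qed.

Lemma bar_on_phiA a : a \in A -> t (phi a) = a.
Proof. by case: t_bar => tA _ /tA[]. Qed.

Lemma bar_out b : b \notin A -> b \notin phi @: A -> t b = b.
Proof. by case: t_bar => _; apply. Qed.

Lemma bar_involutionV : t^-1 = t.
Proof.
apply/eqP; rewrite eq_invg_mul; apply/eqP/permP=> b; rewrite permM perm1.
have [bA|bA] := boolP (b \in A); first by rewrite [t b]bar_on_A ?bar_on_phiA.
have [/imsetP[a aA ->]|bphiA] := boolP (b \in phi @: A).
  by rewrite [t (phi a)]bar_on_phiA ?bar_on_A.
by rewrite !bar_out.
Qed.

Lemma bar_imset_A : t @: A = phi @: A.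
Proof. by apply: eq_in_imset => a /bar_on_A. Qed.

Lemma bar_imset_phiA : t @: (phi @: A) = A.
Proof.
rewrite -imset_comp -[RHS]imset_id; apply: eq_in_imset => a aA /=.
exact: bar_on_phiA.
Qed.

Lemma bar_conj (D1 D2 : {set {perm T}}) (psi : {perm T} -> {perm T}) :
  {in D1, forall g, perm_on A g} -> {in D2, forall g, perm_on (phi @: A) g} ->
  psi @: D1 = D2 ->
  (forall a g, a \in A -> g \in D1 -> phi (g a) = psi g (phi a)) ->
  D1 :^ t = D2.
Proof.
move=> D1_on D2_on psiD1 psiE.
suff conj_psi : {in D1, forall g, g ^ t = psi g}.
  by rewrite -psiD1 /conjugate; apply: eq_in_imset.
move=> g D1g; have gA := D1_on g D1g.
have psigB : perm_on (phi @: A) (psi g) by rewrite D2_on // -psiD1 imset_f.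
apply/permP=> b; rewrite conjg_permE bar_involutionV.
have [/imsetP[a aA ->]|bB] := boolP (b \in phi @: A).
  by rewrite bar_on_phiA // bar_on_A ?perm_closed // psiE.
rewrite (out_perm psigB bB).
have [bA|bA] := boolP (b \in A); last first.
  by rewrite [t b]bar_out // (out_perm gA bA) bar_out.
rewrite [t b]bar_on_A // (out_perm gA) ?bar_on_phiA //.
by rewrite (disjointFl disjoint_A_phiA (imset_f phi bA)).
Qed.

End BarInvolution.

Section BlockGeneration.
Variables (T I : finType) (Omega : I -> {set T}) (G : I -> {group {perm T}}).
Variable L : {group {perm T}}.
Hypothesis Omega_inj : injective Omega.
Hypothesis Omega_cover : forall b, exists i, b \in Omega i.
Hypothesis mem_Omega_inj : forall i j b, b \in Omega i -> b \in Omega j -> i = j.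
Hypothesis G_Sym : forall i, G i \subset perm.Sym (Omega i).
Hypothesis block_stab_sub_L : forall i, 'N_(perm.Sym (Omega i))(G i) \subset L.

Definition block_compatible (x : {perm T}) :=
  forall l, exists j, x @: Omega l = Omega j /\ G l :^ x = G j.

Lemma block_compatibleM x y :
  block_compatible x -> block_compatible y -> block_compatible (x * y).
Proof.
move=> cx cy l; have [j [xOl xGl]] := cx l; have [m [yOj yGj]] := cy j.
by exists m; rewrite perm_imsetM xOl yOj conjsgM xGl yGj.
Qed.

Lemma block_fixing_in_L x :
  block_compatible x -> (forall l, x @: Omega l = Omega l) -> x \in L.
Proof.
move=> cx xO; have nOx l := astabs_perm_imset (xO l).
rewrite (prod_restr_perm Omega_cover mem_Omega_inj nOx); apply: group_prod => l _.
apply: subsetP (block_stab_sub_L l) _ _.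
rewrite in_setI [_ \in perm.Sym _]inE restr_perm_on; apply/normP.
have [j [xOl xGl]] := cx l; have jl : j = l by apply: Omega_inj; rewrite -xOl xO.
subst j; rewrite -[RHS]xGl; apply: eq_in_imset => g /(subsetP (G_Sym l)); rewrite inE => gO.
exact: conjg_restr_perm.
Qed.

Variables (i1 : I) (t : I -> {perm T}).
Hypothesis t_in_L : forall i, i != i1 -> t i \in L.
Hypothesis t_Omega : forall i l, i != i1 -> t i @: Omega l = Omega (tperm i1 i l).
Hypothesis t_Sylow : forall i l, i != i1 -> G l :^ t i = G (tperm i1 i l).

Lemma exists_block_swap a b : a != b ->
  exists s, [/\ s \in L, block_compatible s & forall l, s @: Omega l = Omega (tperm a b l)].
Proof.
have t_compatible i : i != i1 -> block_compatible (t i).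
  by move=> ii1 l; exists (tperm i1 i l); rewrite t_Omega ?t_Sylow.
move=> ab; have [ai1 | ai1] := eqVneq a i1.
  have bi1 : b != i1 by rewrite -ai1 eq_sym.
  exists (t b); split; [exact: t_in_L | exact: t_compatible |].
  by move=> l; rewrite ai1 t_Omega.
have [bi1 | bi1] := eqVneq b i1.
  exists (t a); split; [exact: t_in_L | exact: t_compatible |].
  by move=> l; rewrite bi1 tpermC t_Omega.
exists (t a * t b * t a); split.
- by rewrite !groupM ?t_in_L.
- by apply: block_compatibleM; first apply: block_compatibleM; apply: t_compatible.
move=> l; rewrite !perm_imsetM !t_Omega //; congr Omega.
have i1b : i1 != b by rewrite eq_sym.
have := tpermJ i1 b (tperm i1 a); rewrite tpermL tpermD // => <-.
by rewrite conjgE !permM tpermV.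
Qed.

Lemma block_compatible_in_L x : block_compatible x -> x \in L.
Proof.
have [n] := ubnP #|[set l | x @: Omega l != Omega l]|.
elim: n x => // n IHn x moved_lt cx.
have [moved0|[l]] := set_0Vmem [set l | x @: Omega l != Omega l].
  apply: block_fixing_in_L => // l; apply/eqP; apply: contraFT (in_set0 l).
  by rewrite -moved0 inE.
rewrite inE => xOl_neq; have [j [xOl _]] := cx l.
have jl : j != l by apply: contraNneq xOl_neq => jl; rewrite xOl jl.
have [s [Ls cs sO]] := exists_block_swap jl.
rewrite -(mulgK s x) groupM ?groupV //; apply: IHn; last exact: block_compatibleM.
rewrite -ltnS; apply: leq_trans _ moved_lt; apply: proper_card.
rewrite properE; apply/andP; split.
  apply/subsetP=> l'; rewrite !inE; apply: contraNN => /eqP xOl'.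
  have ll' : l != l' by apply: contraNneq xOl_neq => ->; rewrite xOl'.
  have jl' : j != l'.
    apply: contraNneq ll' => jl'; apply/eqP/Omega_inj/(imset_inj (@perm_inj _ x)).
    by rewrite xOl jl' xOl'.
  by rewrite perm_imsetM xOl' sO tpermD.
by apply/subsetPn; exists l; rewrite !inE ?xOl_neq // perm_imsetM xOl sO tpermL eqxx.
Qed.

End BlockGeneration.

Section BlockSwaps.
Variables (T I : finType) (H : {group {perm T}}) (Omega : I -> {set T}).
Hypothesis Omega_inj : injective Omega.
Hypothesis orbits_Omega : [set orbit 'P H a | a : T] = [set Omega i | i : I].
Variables (i1 i : I) (phi : T -> T) (t : {perm T}).
Hypothesis i_neq_i1 : i != i1.
Hypothesis phi_iso : witnesses_perm_iso phi (Omega i1) (restr_grp (Omega i1) H)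
                                       (Omega i) (restr_grp (Omega i) H).
Hypothesis t_bar : bar_involution (Omega i1) phi t.

Local Notation D l := (restr_grp (Omega l) H).

Let phi_Omega : phi @: Omega i1 = Omega i.
Proof. by case: phi_iso. Qed.

Let disjoint_Omega_i1_i : [disjoint Omega i1 & phi @: Omega i1].
Proof.
rewrite phi_Omega; apply/pred0P=> a /=; apply/negbTE/andP=> [[ai1 ai]].
by move/negP: i_neq_i1; apply; rewrite (mem_Omega_inj Omega_inj orbits_Omega ai ai1).
Qed.

Let bar_fix_Omega l :
  l != i1 -> l != i -> {in Omega l, forall b, t b = b}.
Proof.
move=> li1 li b bl; have disj := mem_Omega_inj Omega_inj orbits_Omega bl.
apply: (bar_out t_bar); rewrite ?phi_Omega; apply/negP=> /disj/eqP; exact/negP.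
Qed.

Lemma bar_Omega l : t @: Omega l = Omega (tperm i1 i l).
Proof.
case: tpermP => [->|->|/eqP li1 /eqP li]; first by rewrite (bar_imset_A t_bar).
  by rewrite -phi_Omega (bar_imset_phiA t_bar).
exact: perm_imset_fix (bar_fix_Omega li1 li).
Qed.

Lemma bar_restr_grp l : D l :^ t = D (tperm i1 i l).
Proof.
have on_D j : {in D j, forall g, perm_on (Omega j) g} by move=> g /perm_on_restr_grp.
have D_i1J : D i1 :^ t = D i.
  case: phi_iso => _ _ [psi [_ _ psiD psiE]].
  by apply: (bar_conj t_bar disjoint_Omega_i1_i) psiD psiE; rewrite ?phi_Omega.
case: tpermP => [->|->|/eqP li1 /eqP li] //.
  by rewrite -D_i1J -{1}(bar_involutionV t_bar) conjsgKV.
rewrite /conjugate -[RHS]imset_id; apply: eq_in_imset => g /on_D gl.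
exact: conjg_perm_on_fix (bar_fix_Omega li1 li) gl.
Qed.

End BlockSwaps.

Lemma normaliser_sub_block_gen (T I : finType) (H : {group {perm T}})
    (Omega : I -> {set T}) p (G : I -> {group {perm T}}) (i1 : I)
    (phi : I -> T -> T) (phibar : I -> {perm T}) :
  injective Omega -> [set orbit 'P H a | a : T] = [set Omega i | i : I] ->
  (forall i, p.-Sylow(restr_grp (Omega i) H) (G i)) ->
  (forall i, G i <| restr_grp (Omega i) H) ->
  (forall i, i != i1 -> witnesses_perm_iso (phi i) (Omega i1) (restr_grp (Omega i1) H)
                                          (Omega i) (restr_grp (Omega i) H)) ->
  (forall i, i != i1 -> bar_involution (Omega i1) (phi i) (phibar i)) ->
  'N(H) \subset <<(\bigcup_i 'N_(perm.Sym (Omega i))(G i))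
                  :|: <<[set phibar i | i in [set i | i != i1]]>> >>.
Proof.
move=> Omega_inj orbitsH sylG nGD phi_iso phibar_bar; apply/subsetP=> x nHx.
apply: (@block_compatible_in_L _ _ Omega G _ Omega_inj _ _ _ _ i1 phibar).
- exact: Omega_cover orbitsH.
- exact: mem_Omega_inj Omega_inj orbitsH.
- move=> i; apply/subsetP=> g /(subsetP (normal_sub (nGD i))) /perm_on_restr_grp.
  by rewrite inE.
- by move=> i; rewrite sub_gen // subsetU // (bigcup_sup i).
- by move=> i ii1; rewrite mem_gen // inE mem_gen ?orbT // imset_f // inE.
- move=> i l ii1; exact: (bar_Omega Omega_inj orbitsH (phi_iso i ii1) (phibar_bar i ii1)).
- move=> i l ii1; apply: Sylow_conj_of_restr_conj sylG nGD _ _ _ _.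
  exact: (bar_restr_grp Omega_inj orbitsH ii1 (phi_iso i ii1) (phibar_bar i ii1)).
- move=> l; exact: (normaliser_conj_Sylow orbitsH sylG nGD l nHx).
Qed.

Theorem proposition7p2 (p k n : nat) (H : {group {perm 'I_n}})
  (Omega : 'I_k -> {set 'I_n}) (i1 : 'I_k)
  (G : 'I_k -> {group {perm 'I_n}}) (Hp H2 : {group {perm 'I_n}})
  (alpha : 'I_k -> 'I_n) (phi : 'I_k -> 'I_n -> 'I_n)
  (phibar : 'I_k -> {perm 'I_n}) :
  prime p -> odd p -> n = (p * k)%N ->
  injective Omega ->
  [set orbit 'P H x | x : 'I_n] = [set Omega i | i : 'I_k] ->
  (forall i, #|Omega i| = p) ->
  (forall i, perm_iso [set: 'Z_p] (dihedral_nat p)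
                      (Omega i) (restr_grp (Omega i) H)) ->
  (forall i, G i \in 'Syl_p(restr_grp (Omega i) H)) ->
  Hp \in 'Syl_p(H) -> H2 \in 'Syl_2(H) ->
  (forall i, alpha i \in Omega i) ->
  (forall i, restr_grp (Omega i) H2 = 'C_(restr_grp (Omega i) H)[alpha i | 'P]) ->
  (forall i, i != i1 ->
     witnesses_perm_iso (phi i) (Omega i1) (restr_grp (Omega i1) H)
                        (Omega i) (restr_grp (Omega i) H)
     /\ phi i (alpha i1) = alpha i) ->
  (forall i, i != i1 -> bar_involution (Omega i1) (phi i) (phibar i)) ->
  let K := <<[set phibar i | i in [set i | i != i1]]>> in
  let L := <<(\bigcup_(i : 'I_k) 'N_(perm.Sym (Omega i))(G i)) :|: K>> in
  let I := 'N_L(Hp) :&: 'N_L(H2) in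
  'N(H) = I * H.
Proof.
move=> p_pr _ _ Omega_inj orbitsH card_Omega D_iso G_Syl Hp_Syl H2_Syl _ _ phi_iso phibar_bar.
move=> K L I; move: Hp_Syl H2_Syl; rewrite !inE => sylHp sylH2.
have sylG i : p.-Sylow(restr_grp (Omega i) H) (G i) by move: (G_Syl i); rewrite inE.
have card_D_dvd i : #|restr_grp (Omega i) H| %| (2 * p)%N.
  apply: dvdn_double_of_multiple_le; first exact: cardG_gt0.
    by rewrite -(card_Omega i) card_Omega_dvd_restr.
  by rewrite (card_perm_iso (D_iso i)) card_dihedral_nat ?prime_gt1.
have nGD i := Sylow_normal_card_dvd_double p_pr (card_D_dvd i) (sylG i).
have nHpH := Sylow_normal_of_blocks orbitsH sylG nGD sylHp.
have defH : Hp <*> H2 = H.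
  apply: Sylow_joing_prime_pair sylHp sylH2 _ => q q_pr.
  case/(prime_dvd_restr_grp orbitsH q_pr)=> i /dvdn_trans/(_ (card_D_dvd i)).
  by rewrite Euclid_dvdM // !dvdn_prime2 // => /orP[]/eqP; [right | left].
have sNHL : 'N(H) \subset L.
  by apply: normaliser_sub_block_gen Omega_inj orbitsH sylG nGD _ phibar_bar => i /phi_iso[].
apply: (normaliser_Sylow_joing (L := <<_>>%G) sylH2 defH _ sNHL).
by rewrite -(normal_Hall_pcore sylHp nHpH) char_norms ?pcore_char.
Qed.
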